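(* Let $k\ge2$ and $n'\ge1$. For every proper coloring of $G^*$ using at most $2k-2$ colors, either every gadget $A_1,\dots,A_{n'}$ is row-colorful or every gadget $A_1,\dots,A_{n'}$ is column-colorful (with respect to the restriction of the coloring to the gadget).
   Context: For integers $k\ge2$ and $n'\ge1$, the graph $G^*$ has node set $[n']\times[k]\times[k]$, and two nodes $(\ell,i,j)$ and $(\ell',i',j')$ are adjacent iff $|\ell-\ell'|\le 1$, $i\ne i'$ and $j\ne j'$. For $\ell\in[n']$, the gadget $A_\ell$ is the subgraph induced by $\{\ell\}\times[k]\times[k]$; its $i$-th row is $\{(\ell,i,j):j\in[k]\}$ and its $j$-th column is $\{(\ell,i,j):i\in[k]\}$. Given a proper coloring, a row (resp. column) of a gadget is colorful if its $k$ nodes receive pairwise distinct colors; a gadget is row-colorful if it has a colorful row and column-colorful if it has a colorful column. *)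

From mathcomp Require Import all_boot.
Set Implicit Arguments. Unset Strict Implicit. Unset Printing Implicit Defensive.

Definition node (n' k : nat) : finType := ('I_n' * 'I_k * 'I_k)%type.

Definition gadj (n' k : nat) (x y : node n' k) : bool :=
  let: (l, i, j) := x in let: (l', i', j') := y in
  [&& (l <= l'.+1), (l' <= l.+1), i != i' & j != j'].

Definition proper_coloring (n' k : nat) (C : Type) (c : node n' k -> C) : Prop :=
  forall x y : node n' k, gadj x y -> c x <> c y.

Definition row_colorful_at (n' k : nat) (C : eqType) (c : node n' k -> C)
  (l : 'I_n') (i : 'I_k) : Prop :=
  forall j j' : 'I_k, j != j' -> c (l, i, j) <> c (l, i, j').

Definition col_colorful_at (n' k : nat) (C : eqType) (c : node n' k -> C)
  (l : 'I_n') (j : 'I_k) : Prop :=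
  forall i i' : 'I_k, i != i' -> c (l, i, j) <> c (l, i', j).

Definition row_colorful (n' k : nat) (C : eqType) (c : node n' k -> C) (l : 'I_n') : Prop :=
  exists i : 'I_k, row_colorful_at c l i.

Definition column_colorful (n' k : nat) (C : eqType) (c : node n' k -> C) (l : 'I_n') : Prop :=
  exists j : 'I_k, col_colorful_at c l j.

From mathcomp Require Import all_boot.
From mathcomp Require Import zify.

Set Implicit Arguments. Unset Strict Implicit. Unset Printing Implicit Defensive.

(* A color that repeats within row i of a gadget can appear in the same or an
   adjacent gadget only in row i: any other node of that color must share a
   row or a column with both repeated nodes, which lie in different columns.
   Hence, if A_l has no colorful row, choosing a repeated color in each row
   gives k distinct colors; if it has no colorful column either, transposition
   gives k more, disjoint from the first ones, so at least 2k colors are used.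
   If A_l has no colorful row but a neighbouring gadget has a colorful row r,
   the repeated colors of the k - 1 rows i <> r of A_l avoid the k distinct
   colors of that row r, so at least 2k - 1 colors are used.  With 2k - 2
   colors, row-colorfulness is therefore the same for all gadgets, and a gadget
   that is not row-colorful is column-colorful. *)

Lemma ord_succ_const n (P : 'I_n -> bool) :
  (forall l l' : 'I_n, l' = l.+1 :> nat -> P l = P l') ->
  forall l l' : 'I_n, P l = P l'.
Proof.
move=> step.
suff to_zero : forall m (hm : m < n) (h0 : 0 < n), P (Ordinal hm) = P (Ordinal h0).
  by case=> [m hm] [m' hm']; rewrite !(to_zero _ _ (leq_ltn_trans (leq0n m) hm)).
elim=> [|m IH] hm h0; first by rewrite (bool_irrelevance hm h0).
by rewrite -(IH (ltnW hm) h0); apply/esym/step.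
Qed.

Lemma card_disjoint_le (T : finType) (A B : {set T}) :
  [disjoint A & B] -> #|A| + #|B| <= #|T|.
Proof. by rewrite -(leq_card_setU A B).2 => /eqP <-; apply: max_card. Qed.

Section GadgetColorings.

Variables (n' k : nat) (C : finType).
Implicit Types (c : node n' k -> C) (l : 'I_n') (i j : 'I_k) (x : C).

Definition transpose_coloring c : node n' k -> C :=
  fun v => let: (l, i, j) := v in c (l, j, i).

Lemma proper_transpose_coloring c :
  proper_coloring c -> proper_coloring (transpose_coloring c).
Proof.
move=> c_proper [[l i] j] [[l' i'] j'] /and4P[l_le l'_le ne_i ne_j].
by apply: c_proper; apply/and4P.
Qed.

Lemma column_colorful_transpose c l :
  column_colorful c l = row_colorful (transpose_coloring c) l.
Proof. by []. Qed.

Definition row_colorfulb c l : bool :=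
  [exists i, [forall j, forall j', (j != j') ==> (c (l, i, j) != c (l, i, j'))]].

Lemma row_colorfulP c l : reflect (row_colorful c l) (row_colorfulb c l).
Proof.
apply: (iffP existsP) => [[i /forallP ri] | [i ri]]; exists i.
- by move=> j j' ne_j; have /forallP/(_ j')/implyP/(_ ne_j)/eqP := ri j.
- by apply/forallP=> j; apply/forallP=> j'; apply/implyP=> ne_j; apply/eqP/ri.
Qed.

Lemma row_colorful_at_inj c l i :
  row_colorful_at c l i -> injective (fun j => c (l, i, j)).
Proof.
by move=> ri j j' same; apply/eqP; apply: contraT => ne_j; case: (ri j j' ne_j).
Qed.

Definition row_repeat c l i x : Prop :=
  exists j j', [/\ j != j', c (l, i, j) = x & c (l, i, j') = x].

Lemma not_row_colorful_repeats c l :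
  ~ row_colorful c l -> exists f : 'I_k -> C, forall i, row_repeat c l i (f i).
Proof.
move=> not_row; apply: fin_all_exists => i.
case: (boolP [exists j, exists j', (j != j') && (c (l, i, j) == c (l, i, j'))]).
  by case/existsP=> j /existsP[j' /andP[ne_j /eqP same]]; exists (c (l, i, j)), j, j'.
move=> no_repeat; exfalso; apply: not_row; exists i => j j' ne_j same.
by case/negP: no_repeat; apply/existsP; exists j; apply/existsP; exists j'; rewrite ne_j same eqxx.
Qed.

Section Proper.

Variables (c : node n' k -> C) (c_proper : proper_coloring c).

Lemma same_color_same_line l l' i j i' j' :
  l <= l'.+1 -> l' <= l.+1 -> c (l, i, j) = c (l', i', j') -> (i == i') || (j == j').
Proof.
move=> l_le l'_le same; apply: contraT; rewrite negb_or => /andP[ne_i ne_j].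
have adj : gadj (l, i, j) (l', i', j') by apply/and4P.
by case: (c_proper adj same).
Qed.

Lemma row_repeat_confined l l' i i' j x :
  l <= l'.+1 -> l' <= l.+1 -> row_repeat c l i x -> c (l', i', j) = x -> i' = i.
Proof.
move=> l_le l'_le [j1 [j2 [ne_j e1 e2]]] e; apply/eqP; apply: contraT => ne_i.
have line (j0 : 'I_k) : c (l, i, j0) = x -> j0 = j.
  move=> e0; have := same_color_same_line l_le l'_le (etrans e0 (esym e)).
  by rewrite eq_sym (negbTE ne_i) => /eqP.
by case/negP: ne_j; rewrite (line _ e1) (line _ e2).
Qed.

Lemma row_repeat_inj l i i' x : row_repeat c l i x -> row_repeat c l i' x -> i = i'.
Proof.
by move=> rep [j [_ [_ e _]]]; rewrite (row_repeat_confined (leqnSn l) (leqnSn l) rep e).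
Qed.

Lemma row_repeat_not_column_repeat l i j x :
  row_repeat c l i x -> ~ row_repeat (transpose_coloring c) l j x.
Proof.
move=> rep [i1 [i2 [ne_i e1 e2]]]; case/negP: ne_i.
have confined := row_repeat_confined (leqnSn l) (leqnSn l) rep.
by rewrite (confined _ _ e1) (confined _ _ e2).
Qed.

End Proper.

Lemma not_row_column_colorful_card c l : proper_coloring c ->
  ~ row_colorful c l -> ~ column_colorful c l -> 2 * k <= #|C|.
Proof.
move=> c_proper /not_row_colorful_repeats[f rep_f].
rewrite column_colorful_transpose => /not_row_colorful_repeats[g rep_g].
have proper_t := proper_transpose_coloring c_proper.
have f_inj : injective f.
  by move=> i i' e; apply: (row_repeat_inj c_proper (rep_f i)); rewrite e; apply: rep_f.
have g_inj : injective g.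
  by move=> j j' e; apply: (row_repeat_inj proper_t (rep_g j)); rewrite e; apply: rep_g.
have disj : [disjoint f @: setT & g @: setT].
  apply/pred0P=> x /=; apply/negbTE/andP=> [[/imsetP[i _ ->] /imsetP[j _ e]]].
  by apply: (row_repeat_not_column_repeat c_proper (rep_f i) (j := j)); rewrite e.
by have := card_disjoint_le disj; rewrite !card_imset // cardsT card_ord addnn mul2n.
Qed.

Lemma row_colorful_neighbour_card c l l' : proper_coloring c ->
  l <= l'.+1 -> l' <= l.+1 ->
  ~ row_colorful c l -> row_colorful c l' -> k + k.-1 <= #|C|.
Proof.
move=> c_proper l_le l'_le /not_row_colorful_repeats[f rep_f] [r row_r].
have f_inj : injective f.
  by move=> i i' e; apply: (row_repeat_inj c_proper (rep_f i)); rewrite e; apply: rep_f.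
have disj : [disjoint [set c (l', r, j) | j : 'I_k] & f @: [set~ r]].
  apply/pred0P=> x /=; apply/negbTE/andP=> [[/imsetP[j _ ->] /imsetP[i ne_r e]]].
  by move: ne_r; rewrite (row_repeat_confined c_proper l_le l'_le (rep_f i) e) !inE eqxx.
have := card_disjoint_le disj.
by rewrite !card_imset ?cardsT ?cardsC1 ?card_ord //; apply: row_colorful_at_inj.
Qed.

Theorem row_or_column_colorful c : #|C| < 2 * k - 1 -> proper_coloring c ->
  (forall l, row_colorful c l) \/ (forall l, column_colorful c l).
Proof.
move=> few_colors c_proper.
have rows_const : forall l l', row_colorfulb c l = row_colorfulb c l'.
  apply: ord_succ_const => l l' succ.
  case: row_colorfulP => row_l; case: row_colorfulP => row_l' //; exfalso.
    by have := row_colorful_neighbour_card c_proper _ _ row_l' row_l; lia.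
  by have := row_colorful_neighbour_card c_proper _ _ row_l row_l'; lia.
case: (boolP [forall l, row_colorfulb c l]) => [/forallP all_rows | ].
  by left => l; apply/row_colorfulP.
rewrite negb_forall => /existsP[l0 not_row0]; right => l.
have not_row : ~ row_colorful c l.
  by move/row_colorfulP; rewrite (rows_const l l0) (negbTE not_row0).
rewrite column_colorful_transpose; apply/row_colorfulP; apply: contraT => /row_colorfulP not_col.
by have := not_row_column_colorful_card c_proper not_row not_col; lia.
Qed.

End GadgetColorings.

Theorem mainTheorem15 (k n' : nat) (hk : 2 <= k) (hn : 1 <= n')
  (c : node n' k -> 'I_(2 * k - 2)) :
  proper_coloring c ->
  (forall l : 'I_n', row_colorful c l) \/ (forall l : 'I_n', column_colorful c l).
Proof. by apply: row_or_column_colorful; rewrite card_ord; lia. Qed.
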